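(* Let $\alpha=(a_1,\dots,a_w)$ have $m$ nonempty horizontal lists, and let $a_i\in\mathbb{L}^m_\alpha$. Let $(a_{i_{m-1}},\dots,a_{i_0})$, with $a_{i_0}=a_i$, be any increasing subsequence of $\alpha$ of length $m$ ending at $a_i$. Then $$\mathrm{pos}(lm^{m-1}_\alpha(a_i))\le i_{m-1}\le \mathrm{pos}(un^{m-1}_\alpha(a_i)).$$ Consequently, among the longest increasing subsequences ending at $a_i$, maximum width is attained by one starting at $lm^{m-1}_\alpha(a_i)$, and minimum width by one starting at $un^{m-1}_\alpha(a_i)$.
   Context: Let $\alpha=(a_1,\dots,a_w)$ be a finite sequence of real numbers, with items identified by their positions; $\mathrm{pos}(a_j)=j$. Increasing subsequences are non-strict. $a_j$ is compatible with $a_i$ if $j<i$ and $a_j\le a_i$. $RL_\alpha(a)$ is the maximum length of an increasing subsequence ending at $a$. $a_j$ is a predecessor of $a_i$ if it is compatible with $a_i$ and $RL_\alpha(a_j)=RL_\alpha(a_i)-1$. The horizontal list $\mathbb{L}^t_\alpha$ is the list of items with rising length $t$, ordered by position. The up neighbor $un_\alpha(a_i)$ is the item $a_j$ with the largest $j<i$ and $RL_\alpha(a_j)=RL_\alpha(a_i)-1$. The leftmost child $lm_\alpha(a_i)$ is the predecessor of $a_i$ with smallest position. Iterates are defined by $f^0(a)=a$ and $f^k=f\circ f^{k-1}$. The width of a subsequence $(a_{j_1},\dots,a_{j_k})$ is $j_k-j_1$. *)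

From HB Require Import structures.
From mathcomp Require Import all_boot all_order all_algebra.
Set Implicit Arguments. Unset Strict Implicit. Unset Printing Implicit Defensive.
Import Order.TTheory GRing.Theory Num.Theory.

(* A sequence alpha = (a_1,...,a_w) is a function a : 'I_w -> R; the item at
   position j is identified with j itself (0-based positions). *)
Section Defs.
Variables (R : realFieldType) (w : nat) (a : 'I_w -> R).

Definition incr_set (S : {set 'I_w}) : bool :=
  [forall j in S, forall k in S, ((j < k)%N ==> (a j <= a k)%R)].

Definition RL (i : 'I_w) : nat :=
  \max_(S : {set 'I_w} | [&& incr_set S, i \in S & [forall j in S, (j <= i)%N]]) #|S|.

Definition compatible (j i : 'I_w) : bool := (j < i)%N && (a j <= a i)%R.

Definition is_pred (j i : 'I_w) : bool := compatible j i && (RL j == (RL i).-1).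

(* up neighbor: largest j < i with RL j = RL i - 1 (default: i itself if none) *)
Definition un (i : 'I_w) : 'I_w :=
  odflt i [pick j : 'I_w | [&& (j < i)%N, RL j == (RL i).-1 &
     [forall k : 'I_w, ((k < i)%N && (RL k == (RL i).-1)) ==> (k <= j)%N]]].

(* leftmost child: predecessor with smallest position (default: i itself if none) *)
Definition lm (i : 'I_w) : 'I_w :=
  odflt i [pick j : 'I_w | is_pred j i && [forall k : 'I_w, is_pred k i ==> (j <= k)%N]].

Definition incr_subseq (s : seq 'I_w) : bool :=
  sorted (fun x y : 'I_w => (x < y)%N) s && sorted (fun x y : 'I_w => (a x <= a y)%R) s.

End Defs.

Definition width (w : nat) (s : seq 'I_w) : nat :=
  match s with [::] => 0 | x :: t => (last x t - x)%N end.

From HB Require Import structures.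
From mathcomp Require Import all_boot all_order all_algebra.
Set Implicit Arguments. Unset Strict Implicit. Unset Printing Implicit Defensive.
Import Order.TTheory GRing.Theory Num.Theory.

(* In an increasing subsequence y_(m-1), ..., y_0 = a_i of length m = RL(a_i),
   each y_(k+1) is a predecessor of y_k, so y_k has rising length m - k; and
   items of equal rising length have strictly decreasing values.  Compare y_k
   with the iterates u_k = un^k(a_i) and l_k = lm^k(a_i) by induction on k.
   If y_k <= u_k, then y_(k+1) lies before u_k on the level below, hence not
   after its last such item u_(k+1).  If l_k <= y_k, either y_(k+1) lies
   after l_k, hence after l_(k+1), or a(y_(k+1)) <= a(y_k) <= a(l_k), so
   y_(k+1) is itself a predecessor of l_k and not left of l_(k+1).  Both
   iterate sequences are increasing subsequences of length m ending at a_i,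
   and the width of such a subsequence is i minus its first position. *)

Lemma sorted_rcons2 (T : Type) (e : rel T) s y x :
  sorted e (rcons (rcons s y) x) = sorted e (rcons s y) && e y x.
Proof. by rewrite -[in LHS]cats1 -[in LHS]cats1 -catA sorted_cat_cons /= andbT. Qed.

Lemma head_rcons2 (T : Type) s (y x : T) :
  head x (rcons (rcons s y) x) = head y (rcons s y).
Proof. by case: s. Qed.

Section RisingLength.
Variables (R : realFieldType) (w : nat) (a : 'I_w -> R).

Definition incr_ending_at (S : {set 'I_w}) (i : 'I_w) :=
  [&& incr_set a S, i \in S & [forall j in S, (j <= i)%N]].

Lemma leq_card_RL S (i : 'I_w) : incr_ending_at S i -> #|S| <= RL a i.
Proof. exact: (@leq_bigmax_cond _ (incr_ending_at^~ i) (fun S => #|S|)). Qed.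

Lemma incr_ending_at1 (i : 'I_w) : incr_ending_at [set i] i.
Proof.
apply/and3P; split; rewrite ?in_set1 //.
- apply/forall_inP => j /set1P ->; apply/forall_inP => k /set1P ->.
  by rewrite ltnn.
- by apply/forall_inP => j /set1P ->.
Qed.

Lemma RL_gt0 (i : 'I_w) : 0 < RL a i.
Proof. by have := leq_card_RL (incr_ending_at1 i); rewrite cards1. Qed.

Lemma RL_witness (i : 'I_w) : exists2 S, incr_ending_at S i & #|S| = RL a i.
Proof.
have [S HS Smax] := @arg_maxnP _ _ (incr_ending_at^~ i) (fun S => #|S|) (incr_ending_at1 i).
exists S => //; apply/eqP; rewrite eqn_leq leq_card_RL //.
by apply/bigmax_leqP => T; apply: Smax.
Qed.

Lemma incr_setS (S T : {set 'I_w}) : S \subset T -> incr_set a T -> incr_set a S.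
Proof.
move=> /subsetP ST HT; apply/forall_inP => p pS; apply/forall_inP => q qS.
exact: (forall_inP (forall_inP HT p (ST p pS)) q (ST q qS)).
Qed.

Lemma RL_compatible (j i : 'I_w) : compatible a j i -> (RL a j).+1 <= RL a i.
Proof.
case/andP=> ji aji; have [S /and3P[incrS jS leSj] <-] := RL_witness j.
have iNS : i \notin S by apply/negP => /(forall_inP leSj); rewrite leqNgt ji.
have -> : #|S|.+1 = #|i |: S| by rewrite cardsU1 iNS.
apply: leq_card_RL; apply/and3P; split.
- have leSi p : p \in S -> (p < i)%N by move/(forall_inP leSj)/leq_ltn_trans; apply.
  apply/forall_inP => p /setU1P[-> | pS]; apply/forall_inP => q /setU1P[-> | qS].
  + by rewrite ltnn.
  + by rewrite ltnNge ltnW ?leSi.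
  + apply/implyP => _; apply: le_trans aji.
    have := forall_inP leSj p pS; rewrite leq_eqVlt => /orP[/eqP/val_inj -> // | pj].
    by have := forall_inP (forall_inP incrS p pS) j jS; rewrite pj.
  + exact: (forall_inP (forall_inP incrS p pS) q qS).
- exact: setU11.
- apply/forall_inP => p /setU1P[-> // | pS].
  exact: leq_trans (forall_inP leSj p pS) (ltnW ji).
Qed.

Lemma RL_eq_lt (p q : 'I_w) : (p < q)%N -> RL a p = RL a q -> (a q < a p)%R.
Proof.
move=> pq eRL; rewrite ltNge; apply/negP => apq.
by have := RL_compatible (introT andP (conj pq apq)); rewrite eRL ltnn.
Qed.

(* Drop i from a witness for RL i; its rightmost remaining element is a predecessor. *)
Lemma exists_pred (i : 'I_w) : 1 < RL a i -> exists j, is_pred a j i.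
Proof.
move=> RLi_gt1; have [S /and3P[incrS iS leSi] cardS] := RL_witness i.
have cardSi : #|S :\ i| = (RL a i).-1 by rewrite -cardS (cardsD1 i S) iS.
have /card_gt0P[k kS] : 0 < #|S :\ i| by rewrite cardSi -ltnS prednK ?RL_gt0.
have [j /setD1P[jNi jS] jmax] := arg_maxnP (fun k : 'I_w => val k) kS.
have ji : (j < i)%N.
  by rewrite ltn_neqAle (forall_inP leSi j jS) andbT; apply: contra jNi => /eqP/val_inj ->.
have aji : (a j <= a i)%R by have := forall_inP (forall_inP incrS j jS) i iS; rewrite ji.
have cji : compatible a j i by rewrite /compatible ji aji.
exists j; rewrite /is_pred cji eqn_leq -ltnS prednK ?RL_gt0 ?RL_compatible //=.
rewrite -cardSi; apply: leq_card_RL; apply/and3P; split.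
- exact: incr_setS (subD1set S i) incrS.
- exact/setD1P.
- by apply/forall_inP => k' k'S; apply: jmax.
Qed.

Lemma un_spec (x y : 'I_w) : (y < x)%N -> RL a y = (RL a x).-1 ->
  [/\ (un a x < x)%N, RL a (un a x) = (RL a x).-1 & (y <= un a x)%N].
Proof.
move=> yx eRLy; pose P (k : 'I_w) := (k < x)%N && (RL a k == (RL a x).-1).
have Py : P y by rewrite /P yx eRLy eqxx.
have [z /andP[zx /eqP eRLz] zmax] := @arg_maxnP _ y P (fun k : 'I_w => val k) Py.
rewrite /un; case: pickP => [u /and3P[ux /eqP eRLu /forallP umax] | noU] /=.
  by split=> //; have := umax y; rewrite yx eRLy eqxx.
have /negP[] := negbT (noU z); rewrite zx eRLz eqxx /=.
by apply/forallP => k; apply/implyP; apply: zmax.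
Qed.

Lemma lm_spec (x y : 'I_w) : is_pred a y x ->
  is_pred a (lm a x) x /\ forall k, is_pred a k x -> (lm a x <= k)%N.
Proof.
move=> Py; have [z Pz zmin] := @arg_minnP _ y (is_pred a ^~ x) (fun k : 'I_w => val k) Py.
rewrite /lm; case: pickP => [u /andP[Pu /forallP umin] | noU] /=.
  by split=> // k Pk; have := umin k; rewrite Pk.
have /negP[] := negbT (noU z); rewrite Pz /=.
by apply/forallP => k; apply/implyP; apply: zmin.
Qed.

Lemma is_pred_un (x : 'I_w) : 1 < RL a x -> is_pred a (un a x) x.
Proof.
case/exists_pred=> y /andP[/andP[yx ayx] /eqP eRLy].
have [ux eRLu yu] := un_spec yx eRLy.
rewrite /is_pred /compatible ux eRLu eqxx andbT /=.
move: yu; rewrite leq_eqVlt => /orP[/eqP/val_inj <- // | yu].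
apply/ltW/(lt_le_trans _ ayx); apply: RL_eq_lt yu _; by rewrite eRLy eRLu.
Qed.

Lemma is_pred_lm (x : 'I_w) : 1 < RL a x -> is_pred a (lm a x) x.
Proof. by case/exists_pred=> y /lm_spec[]. Qed.

Lemma incr_subseq_rcons2 s (y x : 'I_w) :
  incr_subseq a (rcons (rcons s y) x) = incr_subseq a (rcons s y) && compatible a y x.
Proof.
by rewrite /incr_subseq /compatible !sorted_rcons2 andbACA.
Qed.

Lemma size_lt_RL s (x : 'I_w) : incr_subseq a (rcons s x) -> size s < RL a x.
Proof.
elim/last_ind: s x => [|s y IH] x; first by rewrite RL_gt0.
rewrite incr_subseq_rcons2 size_rcons => /andP[/IH sizes cyx].
exact: leq_ltn_trans sizes (RL_compatible cyx).
Qed.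

Lemma longest_chain_pred s (y x : 'I_w) :
  incr_subseq a (rcons (rcons s y) x) -> RL a x = (size s).+2 ->
  [/\ incr_subseq a (rcons s y), is_pred a y x & RL a y = (size s).+1].
Proof.
rewrite incr_subseq_rcons2 => /andP[incr cyx] eRLx.
have eRLy : RL a y = (size s).+1.
  apply/eqP; rewrite eqn_leq size_lt_RL // andbT.
  by rewrite -ltnS -eRLx RL_compatible.
by split=> //; rewrite /is_pred cyx eRLy eRLx /=.
Qed.

Lemma head_le_iter_un s (x z : 'I_w) : incr_subseq a (rcons s x) ->
  RL a x = (size s).+1 -> RL a z = RL a x -> (x <= z)%N ->
  (head x (rcons s x) <= iter (size s) (un a) z)%N.
Proof.
elim/last_ind: s x z => [|s y IH] x z //.
rewrite size_rcons head_rcons2 iterSr => incr eRLx eRLz xz.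
have [incr' /andP[/andP[yx _] _] eRLy] := longest_chain_pred incr eRLx.
have eRLyz : RL a y = (RL a z).-1 by rewrite eRLy eRLz eRLx.
have [_ eRLu yu] := un_spec (leq_trans yx xz) eRLyz.
by apply: IH => //; rewrite eRLu eRLz eRLx.
Qed.

Lemma iter_lm_le_head s (x z : 'I_w) : incr_subseq a (rcons s x) ->
  RL a x = (size s).+1 -> RL a z = RL a x -> (z <= x)%N ->
  (iter (size s) (lm a) z <= head x (rcons s x))%N.
Proof.
elim/last_ind: s x z => [|s y IH] x z //.
rewrite size_rcons head_rcons2 iterSr => incr eRLx eRLz zx.
have [incr' Pyx eRLy] := longest_chain_pred incr eRLx.
have RLz_gt1 : 1 < RL a z by rewrite eRLz eRLx.
have [Plm lm_min] := lm_spec (is_pred_lm RLz_gt1).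
have eRLlm : RL a (lm a z) = RL a y by case/andP: Plm => _ /eqP ->; rewrite eRLz eRLx eRLy.
apply: IH => //; move: zx; rewrite leq_eqVlt => /orP[/eqP/val_inj zx | zx].
  by apply: lm_min; rewrite zx.
case: (ltnP y z) => [yz | zy].
  apply: lm_min; case/andP: Pyx => /andP[_ ayx] _.
  (* a y <= a x < a z, as x and z lie on the same level with z left of x *)
  rewrite /is_pred /compatible yz eRLy eRLz eRLx eqxx andbT /=.
  by apply/(le_trans ayx)/ltW/RL_eq_lt.
by case/andP: Plm => /andP[lmz _] _; exact: ltnW (leq_trans lmz zy).
Qed.

Lemma exists_chain_iter (f : 'I_w -> 'I_w) n (x : 'I_w) :
  (forall y, 1 < RL a y -> is_pred a (f y) y) -> RL a x = n.+1 ->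
  exists s, [/\ incr_subseq a (rcons s x), size s = n & head x (rcons s x) = iter n f x].
Proof.
move=> f_pred; elim: n x => [|n IH] x eRLx; first by exists [::].
have /andP[cfx /eqP eRLfx] : is_pred a (f x) x by apply: f_pred; rewrite eRLx.
have /IH[s [incr sizes heads]] : RL a (f x) = n.+1 by rewrite eRLfx eRLx.
exists (rcons s (f x)).
by rewrite incr_subseq_rcons2 incr cfx size_rcons sizes head_rcons2 heads iterSr.
Qed.

Lemma width_last s (x : 'I_w) : last x s = x -> width s = (x - head x s)%N.
Proof.
case/lastP: s => [_ | s y]; first by rewrite /= subnn.
by rewrite last_rcons => ->; case: s => [|z s] /=; rewrite ?subnn ?last_rcons.
Qed.

Lemma leq_width_last s s' (x : 'I_w) : last x s = x -> last x s' = x ->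
  (head x s <= head x s')%N -> (width s' <= width s)%N.
Proof. by move=> /width_last-> /width_last->; apply: leq_sub2l. Qed.

Lemma longest_chain_head_bounds s (x : 'I_w) :
  incr_subseq a s -> size s = RL a x -> last x s = x ->
  (iter (RL a x).-1 (lm a) x <= head x s <= iter (RL a x).-1 (un a) x)%N.
Proof.
case/lastP: s => [_ /esym RL0 | s y]; first by have := RL_gt0 x; rewrite RL0.
rewrite size_rcons last_rcons => incr /esym eRLx eyx; subst x.
by rewrite eRLx iter_lm_le_head ?head_le_iter_un.
Qed.

Lemma exists_longest_chain_iter (f : 'I_w -> 'I_w) (x : 'I_w) :
  (forall y, 1 < RL a y -> is_pred a (f y) y) -> exists s,
  [/\ incr_subseq a s, size s = RL a x, last x s = x & head x s = iter (RL a x).-1 f x].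
Proof.
move=> f_pred; have eRLx : RL a x = (RL a x).-1.+1 by rewrite prednK ?RL_gt0.
have [s [incr sizes heads]] := exists_chain_iter f_pred eRLx.
by exists (rcons s x); rewrite size_rcons sizes -eRLx last_rcons.
Qed.

End RisingLength.

Theorem mainTheorem11 (R : realFieldType) (w : nat) (a : 'I_w -> R)
  (m : nat) (i : 'I_w)
  (Hlists : forall t : nat, (exists j : 'I_w, RL a j = t) <-> (1 <= t <= m)%N)
  (Hi : RL a i = m) :
  (forall s : seq 'I_w, incr_subseq a s -> size s = m -> last i s = i ->
     (iter m.-1 (lm a) i <= head i s <= iter m.-1 (un a) i)%N)
  /\ (exists s : seq 'I_w, [/\ incr_subseq a s, size s = m, last i s = i,
        head i s = iter m.-1 (lm a) i &
        forall s' : seq 'I_w, incr_subseq a s' -> size s' = m -> last i s' = i ->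
          (width s' <= width s)%N])
  /\ (exists s : seq 'I_w, [/\ incr_subseq a s, size s = m, last i s = i,
        head i s = iter m.-1 (un a) i &
        forall s' : seq 'I_w, incr_subseq a s' -> size s' = m -> last i s' = i ->
          (width s <= width s')%N]).
Proof.
subst m; split; first by move=> s; apply: longest_chain_head_bounds.
split.
  have [s [incr sizes lasts heads]] := exists_longest_chain_iter i (@is_pred_lm _ _ a).
  exists s; split=> [//|//|//|//|s' incr' sizes' lasts'].
  apply: (leq_width_last lasts lasts'); rewrite heads.
  by case/andP: (longest_chain_head_bounds incr' sizes' lasts').
have [s [incr sizes lasts heads]] := exists_longest_chain_iter i (@is_pred_un _ _ a).
exists s; split=> [//|//|//|//|s' incr' sizes' lasts'].
apply: (leq_width_last lasts' lasts); rewrite heads.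
by case/andP: (longest_chain_head_bounds incr' sizes' lasts').
Qed.
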